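(* The ordinary generating function $A(x,y;p,1)=\sum_{n\ge1}a_n(y;p,1)x^n$ is given by $$A(x,y;p,1)=xyp+\frac{x^2yp(1-p)}{1-yp}\left(\sum_{j\ge0}\frac{(-1)^jx^jp^{j+\binom{j+2}{2}}}{\prod_{i=0}^{j}(1-p-xp^{i+1})}-y^2p^2\sum_{j\ge0}\frac{(-1)^jx^jy^jp^{2j+\binom{j+2}{2}}}{\prod_{i=0}^{j}(1-p-xyp^{i+2})}\right).$$
   Context: An inversion sequence of length $n$ is a sequence $\rho=\rho_1\cdots\rho_n$ of integers with $1\le \rho_i\le i$ for all $i$; $I_{n,i}$ is the set of those of length $n$ with last letter $i$. Let $\mathrm{area}(\rho)=\rho_1+\cdots+\rho_n$ and $\mathrm{sper}(\rho)=n+\rho_1+\sum_{i=1}^{n-1}\max(\rho_{i+1}-\rho_i,0)$ (area and semi-perimeter of the associated bargraph). Define $a_n(y;p,q)=\sum_{i=1}^n y^i\sum_{\rho\in I_{n,i}}p^{\mathrm{area}(\rho)}q^{\mathrm{sper}(\rho)}$. The identity is one of power series in $x$ (with coefficients rational functions of $p,y$; e.g. valid for $|x|,|p|<1$ small enough). *)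

From HB Require Import structures.
From mathcomp Require Import all_boot all_order all_algebra.
From mathcomp Require Import all_classical all_reals all_analysis.
Set Implicit Arguments. Unset Strict Implicit. Unset Printing Implicit Defensive.
Import Order.TTheory GRing.Theory Num.Theory.
Import numFieldNormedType.Exports.
Local Open Scope ring_scope.

(* A candidate word of length n: position i (0-based) holds a value in 0..n.
   rho_{i+1} (1-based in the paper) is  val (f i). *)
Definition word n := {ffun 'I_n -> 'I_n.+1}.

(* inversion sequence: 1 <= rho_i <= i (1-based), i.e. 1 <= f i <= i+1 (0-based) *)
Definition is_invseq n (f : word n) : bool :=
  [forall i : 'I_n, (0 < f i)%N && (f i <= i.+1)%N].

Definition letters n (f : word n) : seq nat := [seq val (f i) | i <- enum 'I_n].

Definition last_letter n (f : word n) : nat := last 0%N (letters f).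

Definition area n (f : word n) : nat := (\sum_(i < n) val (f i))%N.

(* sper = n + rho_1 + sum_{i=1}^{n-1} max(rho_{i+1} - rho_i, 0);
   truncated nat subtraction implements max(. , 0). *)
Definition sper n (f : word n) : nat :=
  (n + head 0 (letters f)
     + \sum_(i < n.-1) (nth 0 (letters f) i.+1 - nth 0 (letters f) i))%N.

Definition a_coef (R : numDomainType) (n : nat) (y p q : R) : R :=
  \sum_(1 <= i < n.+1) y ^+ i *
    \sum_(f : word n | is_invseq f && (last_letter f == i)) p ^+ area f * q ^+ sper f.

Definition rhs_term1 (R : fieldType) (x p : R) (j : nat) : R :=
  (-1) ^+ j * x ^+ j * p ^+ (j + 'C(j.+2, 2)) /
    \prod_(i < j.+1) (1 - p - x * p ^+ i.+1).

Definition rhs_term2 (R : fieldType) (x y p : R) (j : nat) : R :=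
  (-1) ^+ j * x ^+ j * y ^+ j * p ^+ (2 * j + 'C(j.+2, 2)) /
    \prod_(i < j.+1) (1 - p - x * y * p ^+ i.+2).

(* At q = 1 the letters of an inversion sequence are chosen independently, the
   one in position i + 1 among 1, ..., i + 1.  Hence
   a_{n+1}(y;p,1) = T_n(p) ((yp) + ... + (yp)^{n+1}) with
   T_n(p) = prod_{i<n} (p + ... + p^{i+1}), and A = xyp/(1-yp) (F(x) - yp F(xyp))
   for F(z) = sum_n T_n(p) z^n.  As (1-p) T_{n+1} = (p - p^{n+2}) T_n, F satisfies
   (1 - p - zp) F(z) = 1 - p - z p^2 F(zp); unrolling this first order recurrence
   along z, zp, zp^2, ... writes F(z) - 1 as (1-p) z times the first series of the
   statement, and the second series is the first one taken at xyp.  For small |x|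
   and |p| all the series involved are dominated by geometric ones. *)

From HB Require Import structures.
From mathcomp Require Import all_boot all_order all_algebra.
From mathcomp Require Import all_classical all_reals all_analysis.
From mathcomp Require Import ring lra.
Import Order.TTheory GRing.Theory Num.Theory.
Import numFieldNormedType.Exports.
Local Open Scope ring_scope.
Local Open Scope classical_set_scope.
Set Implicit Arguments.
Unset Strict Implicit.
Unset Printing Implicit Defensive.

Lemma recurrence_unroll (R : pzRingType) (u a b : nat -> R) :
    (forall n, u n = a n + b n * u n.+1) ->
  forall K, u 0%N = \sum_(j < K) (\prod_(i < j) b i) * a j + (\prod_(i < K) b i) * u K.
Proof.
move=> rec; elim=> [|K IH]; first by rewrite !big_ord0 mul1r add0r.
by rewrite IH rec !big_ord_recr /= mulrDr addrA mulrA.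
Qed.

Lemma cvg_series_recurrence (R : numFieldType) (u a b : R ^nat) :
    (forall n, u n = a n + b n * u n.+1) ->
    (fun K => (\prod_(i < K) b i) * u K) @ \oo --> 0 ->
  series (fun j => (\prod_(i < j) b i) * a j) @ \oo --> u 0%N.
Proof.
move=> rec rem0; rewrite -[u 0%N]subr0.
have -> : series (fun j => (\prod_(i < j) b i) * a j) =
    (fun K => u 0%N - (\prod_(i < K) b i) * u K).
  by apply/funext => K; rewrite seriesEord /= (recurrence_unroll rec K) addrK.
exact: cvgB (cvg_cst _) rem0.
Qed.

Section geometric_domination.
Variables (R : realType) (u : R ^nat) (C r : R).
Hypotheses (r_gt0 : 0 < r) (r_lt1 : r < 1) (u_le : forall n, `|u n| <= C * r ^+ n).

Let normr_lt1 : `|r| < 1. Proof. by rewrite gtr0_norm. Qed.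

Lemma cvg0_dominated_geometric : u @ \oo --> 0.
Proof.
apply/norm_cvg0P; apply: (@squeeze_cvgr _ _ _ _ (cst 0) (geometric C r)).
- by apply: nearW => n; rewrite normr_ge0 /=; exact: u_le.
- exact: cvg_cst.
- exact: cvg_geometric.
Qed.

Lemma is_cvg_series_dominated_geometric : cvgn (series u).
Proof.
apply: normed_cvg; apply: (@series_le_cvg _ _ (geometric C r)) => [n|n|n|].
- exact: normr_ge0.
- exact: le_trans (normr_ge0 _) (u_le n).
- exact: u_le.
- exact: is_cvg_geometric_series.
Qed.

Lemma norm_lim_series_dominated_geometric : `|limn (series u)| <= C / (1 - r).
Proof.
have C_ge0 : 0 <= C by rewrite -[C]mulr1 -(expr0 r); exact: le_trans (normr_ge0 _) (u_le 0).
apply: cvgr_to_le (cvg_norm is_cvg_series_dominated_geometric) _.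
apply: nearW => N; apply: le_trans (geometric_le_lim N C_ge0 r_gt0 normr_lt1).
rewrite !seriesEord /=; apply: le_trans (ler_norm_sum _ _ _) _.
by apply: ler_sum => n _; exact: u_le.
Qed.

End geometric_domination.

Lemma geometric_sum1 (R : comPzRingType) (q : R) n :
  (1 - q) * \sum_(1 <= k < n.+1) q ^+ k = q * (1 - q ^+ n).
Proof.
elim: n => [|n IH]; first by rewrite big_geq // expr0 mulr0 subrr mulr0.
by rewrite big_nat_recr //= mulrDr IH exprS; ring.
Qed.

(* Letter [i] of an inversion sequence ranges over [1 .. i+1], so [area_gf p n]
   is the generating polynomial of inversion sequences of length [n] by area. *)
Definition area_gf (R : pzSemiRingType) (p : R) (n : nat) : R :=
  \prod_(i < n) \sum_(1 <= k < i.+2) p ^+ k.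

Lemma sum_invseq_prod (R : comPzSemiRingType) n (c : 'I_n -> R) :
  \sum_(f : word n | is_invseq f) \prod_(i < n) c i ^+ f i =
  \prod_(i < n) \sum_(1 <= k < i.+2) c i ^+ k.
Proof.
have factorE (i : 'I_n) : \sum_(1 <= k < i.+2) c i ^+ k =
    \sum_(k : 'I_n.+1 | (0 < k <= i.+1)%N) c i ^+ k.
  rewrite big_geq_mkord (big_ord_widen_cond n.+1) ?ltnS //.
under [RHS]eq_bigr do rewrite factorE.
rewrite bigA_distr_big_dep; apply: eq_bigl => f.
by apply/forallP/familyP => /= H i; apply: H.
Qed.

Lemma last_letterE n (f : word n.+1) : last_letter f = f ord_max.
Proof. by rewrite /last_letter /letters enum_ordSr map_rcons last_rcons. Qed.

Lemma last_letter_range n (f : word n.+1) :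
  is_invseq f -> (1 <= last_letter f < n.+2)%N.
Proof. by rewrite last_letterE => /forallP/(_ ord_max). Qed.

Lemma a_coef_q1 (R : numDomainType) n (y p : R) :
  a_coef n.+1 y p 1 = area_gf p n * \sum_(1 <= k < n.+2) (y * p) ^+ k.
Proof.
pose c (i : 'I_n.+1) := if i == ord_max then y * p else p.
have c_widen (i : 'I_n) : c (widen_ord (leqnSn n) i) = p.
  by rewrite /c -val_eqE /= ltn_eqF.
have weightE (f : word n.+1) : y ^+ last_letter f * p ^+ area f = \prod_i c i ^+ f i.
  rewrite last_letterE /area -prodrXr !big_ord_recr /= {2}/c eqxx exprMn mulrCA.
  by under [in RHS]eq_bigr do rewrite c_widen.
transitivity (\sum_(f : word n.+1 | is_invseq f) y ^+ last_letter f * p ^+ area f).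
  rewrite /a_coef; under eq_bigr do rewrite mulr_sumr.
  rewrite (exchange_big_dep predT) //= [RHS]big_mkcond; apply: eq_bigr => f _.
  have [inv_f|_] := boolP (is_invseq f); last by rewrite big_pred0.
  under eq_bigl do rewrite eq_sym.
  by rewrite big_nat1_eq last_letter_range // expr1n mulr1.
rewrite (eq_bigr _ (fun f _ => weightE f)) sum_invseq_prod big_ord_recr /= {2}/c eqxx.
by under [in LHS]eq_bigr do rewrite c_widen.
Qed.

Lemma area_gfS (R : comPzRingType) (p : R) m :
  (1 - p) * area_gf p m.+1 = (p - p ^+ m.+2) * area_gf p m.
Proof.
by rewrite /area_gf big_ord_recr /= mulrCA geometric_sum1 mulrBr mulr1 -exprS mulrC.
Qed.

Lemma norm_area_gf_le1 (R : realFieldType) (p : R) m : `|p| <= 1 / 2 -> `|area_gf p m| <= 1.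
Proof.
move=> p_small; rewrite normr_prod; apply: prodr_ile1 => i _.
rewrite normr_ge0 /=; apply: le_trans (ler_norm_sum _ _ _) _.
under eq_bigr do rewrite normrX.
have := geometric_sum1 `|p| i.+1; have := exprn_ge0 i.+1 (normr_ge0 p).
have := normr_ge0 p; nra.
Qed.

Definition area_series (R : realType) (p z : R) : R :=
  limn (series (fun m => area_gf p m * z ^+ m)).

Section area_series.
Variables (R : realType) (p : R).
Hypothesis p_small : `|p| <= 1 / 2.

Lemma area_series_term_le z : `|z| <= 1 / 2 ->
  forall m, `|area_gf p m * z ^+ m| <= 1 * (1 / 2) ^+ m.
Proof.
move=> z_small m; rewrite normrM normrX.
apply: ler_pM => //; first exact: norm_area_gf_le1.
by apply: lerXn2r => //; rewrite nnegrE.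
Qed.

Lemma is_cvg_area_series z : `|z| <= 1 / 2 ->
  cvgn (series (fun m => area_gf p m * z ^+ m)).
Proof.
move=> z_small.
by apply: (is_cvg_series_dominated_geometric _ _ (area_series_term_le z_small)); lra.
Qed.

Lemma norm_area_series_le2 z : `|z| <= 1 / 2 -> `|area_series p z| <= 2.
Proof.
move=> z_small; apply: le_trans.
  by apply: (norm_lim_series_dominated_geometric _ _ (area_series_term_le z_small)); lra.
by rewrite ler_pdivrMr; lra.
Qed.

Lemma area_series_partial_rec z N :
  let s v := series (fun m => area_gf p m * v ^+ m) in
  (1 - p) * (s z N.+1 - 1) = z * p * s z N - z * p ^+ 2 * s (z * p) N.
Proof.
have area_gf0 : area_gf p 0 = 1 by rewrite /area_gf big_ord0.
move=> s; rewrite /s !seriesEord /= big_ord_recl /= area_gf0 expr0 mulr1 addrAC subrr add0r.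
rewrite !mulr_sumr -sumrB; apply: eq_bigr => m _.
by rewrite /bump /= add1n [LHS]mulrA area_gfS exprMn !exprS; ring.
Qed.

Lemma area_series_rec z : `|z| <= 1 / 2 ->
  (1 - p - z * p) * area_series p z = 1 - p - z * p ^+ 2 * area_series p (z * p).
Proof.
move=> z_small.
have zp_small : `|z * p| <= 1 / 2.
  by rewrite normrM; apply: le_trans (ler_pM _ _ z_small p_small) _ => //; lra.
set s := fun v N => series (fun m => area_gf p m * v ^+ m) N.
have cvg_via_rec : (fun N => z * p * s z N - z * p ^+ 2 * s (z * p) N) @ \oo -->
    (1 - p) * (area_series p z - 1).
  under eq_fun do rewrite -area_series_partial_rec.
  apply: cvgMl_tmp; apply: cvgB (cvg_cst _); rewrite cvg_shiftS.
  exact: is_cvg_area_series.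
have cvg_termwise : (fun N => z * p * s z N - z * p ^+ 2 * s (z * p) N) @ \oo -->
    z * p * area_series p z - z * p ^+ 2 * area_series p (z * p).
  by apply: cvgB; apply: cvgMl_tmp; apply: is_cvg_area_series.
have E : (1 - p) * (area_series p z - 1) =
    z * p * area_series p z - z * p ^+ 2 * area_series p (z * p).
  exact: (cvg_unique _ cvg_via_rec cvg_termwise).
have -> : (1 - p - z * p) * area_series p z =
    (1 - p) * (area_series p z - 1) - z * p * area_series p z + (1 - p) by ring.
by rewrite E; ring.
Qed.

End area_series.

Section area_series_expansion.
Variables (R : realType) (p z : R).
Hypotheses (p_small : `|p| <= 1 / 4) (z_small : `|z| <= 1 / 4).

(* The functional equation [area_series_rec] at [z p^n] rearranges into the
   recurrence [u_rec], whose unrolled terms are those of [rhs_term1]. *)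
Let D (i : nat) : R := 1 - p - z * p ^+ i.+1.
Let a (i : nat) : R := z * p ^+ i.+1 * (1 - p) / D i.
Let b (i : nat) : R := - (z * p ^+ i.+2) / D i.
Let u (i : nat) : R := area_series p (z * p ^+ i) - 1.

Let norm_zpX_le n : `|z * p ^+ n| <= 1 / 4.
Proof.
rewrite normrM normrX -[X in _ <= X]mulr1.
apply: ler_pM => //.
by apply: exprn_ile1 => //; move: p_small; lra.
Qed.

Let norm_D_ge i : 1 / 2 <= `|D i|.
Proof.
have := lerB_dist 1 (p + z * p ^+ i.+1); rewrite normr1 opprD addrA.
have := ler_normD p (z * p ^+ i.+1); have := norm_zpX_le i.+1; move: p_small; lra.
Qed.

Let D_neq0 i : D i != 0.
Proof. by rewrite -normr_gt0; apply: lt_le_trans (norm_D_ge i); lra. Qed.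

Let u_rec n : u n = a n + b n * u n.+1.
Proof.
have p_half : `|p| <= 1 / 2 by move: p_small; lra.
have zp_half : `|z * p ^+ n| <= 1 / 2 by move: (norm_zpX_le n); lra.
have := area_series_rec p_half zp_half.
have zp1 : z * p ^+ n * p = z * p ^+ n.+1 by rewrite exprSr mulrA.
have zp2 : z * p ^+ n * p ^+ 2 = z * p ^+ n.+2 by rewrite -mulrA -exprD addn2.
rewrite zp1 zp2 => rec.
apply: (mulfI (D_neq0 n)); rewrite /u /a /b /D mulrBr mulr1 rec.
by rewrite !exprS; field; rewrite -!exprS; apply: D_neq0.
Qed.

Let prodD_neq0 j : \prod_(i < j) D i != 0.
Proof. by apply/prodf_neq0 => i _; apply: D_neq0. Qed.

Let prod_b j :
  \prod_(i < j) b i = (-1) ^+ j * z ^+ j * p ^+ (j + 'C(j.+1, 2)) / \prod_(i < j) D i.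
Proof.
elim: j => [|j IH]; first by rewrite !big_ord0 bin_small // !expr0 !mul1r invr1.
have -> : (j.+1 + 'C(j.+2, 2) = j + 'C(j.+1, 2) + j.+2)%N.
  by rewrite binS bin1 addSn !addnS addnA.
rewrite !big_ord_recr /= IH /b [in RHS]exprD !exprS.
by field; rewrite D_neq0 prodD_neq0.
Qed.

Let term_closed j : (\prod_(i < j) b i) * a j = (1 - p) * z * rhs_term1 z p j.
Proof.
rewrite /rhs_term1.
have -> : (j + 'C(j.+2, 2) = j + 'C(j.+1, 2) + j.+1)%N by rewrite binS bin1 addnA.
rewrite prod_b /a -/(\prod_(i < j.+1) D i) big_ord_recr /= [in RHS]exprD !exprS.
by field; rewrite D_neq0 prodD_neq0.
Qed.

Let norm_prod_le (F : nat -> R) (c : R) j : (forall i, `|F i| <= c) ->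
  `|\prod_(i < j) F i| <= c ^+ j.
Proof.
move=> F_le; rewrite normr_prod -[X in c ^+ X](card_ord j) -prodr_const.
by apply: ler_prod => i _; rewrite normr_ge0 F_le.
Qed.

Let remainder_cvg0 : (fun K => (\prod_(i < K) b i) * u K) @ \oo --> 0.
Proof.
have b_le i : `|b i| <= 1 / 2.
  rewrite /b normrM normrN normfV ler_pdivrMr; last by apply: lt_le_trans (norm_D_ge i); lra.
  by have := norm_D_ge i; have := norm_zpX_le i.+2; lra.
have u_le K : `|u K| <= 3.
  have zp_half : `|z * p ^+ K| <= 1 / 2 by move: (norm_zpX_le K); lra.
  have p_half : `|p| <= 1 / 2 by move: p_small; lra.
  apply: le_trans (ler_normB _ _) _; rewrite normr1.
  by have := norm_area_series_le2 p_half zp_half; lra.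
apply: (@cvg0_dominated_geometric _ _ 3 (1 / 2)) => [||K]; try lra.
rewrite normrM mulrC; apply: ler_pM => //; exact: norm_prod_le.
Qed.

Lemma norm_rhs_term1_le j : `|rhs_term1 z p j| <= 2 * (1 / 2) ^+ j.
Proof.
have Dinv_le i : `|(D i)^-1| <= 2.
  have D_ge := norm_D_ge i.
  rewrite normfV -[2]invrK lef_pV2 ?posrE ?invr_gt0 //; last by apply: lt_le_trans D_ge; lra.
  by rewrite -div1r.
have num_le : `|(-1) ^+ j * z ^+ j * p ^+ (j + 'C(j.+2, 2))| <= (1 / 4) ^+ j.
  rewrite !normrM !normrX normrN1 expr1n !mul1r -[X in _ <= X]mulr1.
  apply: ler_pM; rewrite ?exprn_ge0 //.
    by apply: lerXn2r; rewrite ?nnegrE //; move: z_small; lra.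
  by apply: exprn_ile1 => //; move: p_small; lra.
rewrite /rhs_term1 -/(\prod_(i < j.+1) D i) -prodfV normrM.
apply: le_trans (ler_pM _ _ num_le (norm_prod_le j.+1 Dinv_le)) _; rewrite ?exprn_ge0 //.
by rewrite exprS mulrCA -exprMn; have -> : 1 / 4 * 2 = 1 / 2 :> R by field.
Qed.

Lemma is_cvg_rhs_term1 : cvgn (series (rhs_term1 z p)).
Proof. by apply: (is_cvg_series_dominated_geometric _ _ norm_rhs_term1_le); lra. Qed.

Lemma area_seriesE :
  area_series p z = 1 + (1 - p) * z * limn (series (rhs_term1 z p)).
Proof.
have scaled : series (fun j => (\prod_(i < j) b i) * a j) =
    (fun N => (1 - p) * z * series (rhs_term1 z p) N).
  apply/funext => N; rewrite !seriesEord /= mulr_sumr.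
  by apply: eq_bigr => j _; exact: term_closed.
have rec_cvg := cvg_series_recurrence u_rec remainder_cvg0; rewrite scaled in rec_cvg.
have S_cvg : (fun N => (1 - p) * z * series (rhs_term1 z p) N) @ \oo -->
    (1 - p) * z * limn (series (rhs_term1 z p)).
  by apply: cvgMl_tmp; exact: is_cvg_rhs_term1.
have E : (1 - p) * z * limn (series (rhs_term1 z p)) = u 0 by exact: (cvg_unique _ S_cvg rec_cvg).
by rewrite E /u expr0 mulr1 addrC subrK.
Qed.

End area_series_expansion.

Lemma a_coef_term (R : numFieldType) (x y p : R) m : y * p != 1 ->
  a_coef m.+1 y p 1 * x ^+ m.+1 =
  x * y * p / (1 - y * p) * (area_gf p m * x ^+ m - y * p * (area_gf p m * (x * y * p) ^+ m)).
Proof.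
move=> yp_neq1; have yp_neq0 : 1 - y * p != 0 by rewrite subr_eq0 eq_sym.
have geom : \sum_(1 <= k < m.+2) (y * p) ^+ k = y * p * (1 - (y * p) ^+ m.+1) / (1 - y * p).
  by apply: (mulfI yp_neq0); rewrite geometric_sum1 [RHS]mulrC divfK.
by rewrite a_coef_q1 geom !exprMn !exprS; field.
Qed.

Lemma cvg_a_coef_series (R : realType) (x y p : R) :
    `|p| <= 1 / 2 -> `|x| <= 1 / 2 -> `|x * y * p| <= 1 / 2 -> y * p != 1 ->
  series (fun n => a_coef n y p 1 * x ^+ n) @ \oo -->
    x * y * p / (1 - y * p) * (area_series p x - y * p * area_series p (x * y * p)).
Proof.
move=> p_small x_small xyp_small yp_neq1; rewrite -cvg_shiftS.
have a_coef0 : a_coef 0 y p 1 = 0 by rewrite /a_coef big_geq.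
have partial N : series (fun n => a_coef n y p 1 * x ^+ n) N.+1 =
    x * y * p / (1 - y * p) * (series (fun m => area_gf p m * x ^+ m) N
      - y * p * series (fun m => area_gf p m * (x * y * p) ^+ m) N).
  rewrite !seriesEord /= big_ord_recl a_coef0 mul0r add0r mulr_sumr -sumrB mulr_sumr.
  by apply: eq_bigr => m _; rewrite a_coef_term.
under eq_fun do rewrite partial.
apply: cvgMl_tmp; apply: cvgB; last apply: cvgMl_tmp; exact: is_cvg_area_series.
Qed.

Lemma rhs_term2E (R : fieldType) (x y p : R) :
  rhs_term2 x y p = rhs_term1 (x * y * p) p.
Proof.
apply/funext => j; rewrite /rhs_term2 /rhs_term1.
have -> : (2 * j + 'C(j.+2, 2) = j + (j + 'C(j.+2, 2)))%N by rewrite mul2n -addnn addnA.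
rewrite exprD !exprMn.
under eq_bigr do rewrite exprS mulrA.
ring.
Qed.

Lemma small_parameters (R : realFieldType) (y : R) :
  exists2 d : R, 0 < d & forall x p : R, `|x| < d -> `|p| < d ->
    [/\ `|x| <= 1 / 4, `|p| <= 1 / 4, `|x * y * p| <= 1 / 4 & y * p != 1].
Proof.
have y1_gt0 : 0 < 4 * (`|y| + 1) by rewrite mulr_gt0 // ltr_pwDr.
set d := 1 / (4 * (`|y| + 1)).
have d_gt0 : 0 < d by rewrite divr_gt0.
have dE : d * (4 * (`|y| + 1)) = 1 by rewrite /d mul1r mulVf // gt_eqF.
exists d => // x p x_small p_small.
have y_ge0 := normr_ge0 y; have x_ge0 := normr_ge0 x; have p_ge0 := normr_ge0 p.
have d_le : d <= 1 / 4 by nra.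
have dy_le : d * `|y| <= 1 / 4 by nra.
have xy_le : `|x| * `|y| <= 1 / 4 by nra.
have yp_le : `|y| * `|p| <= 1 / 4 by nra.
split; [lra | lra | |].
- by rewrite !normrM; nra.
- by rewrite lt_eqF //; apply: le_lt_trans (ler_norm _) _; rewrite normrM; lra.
Qed.

Theorem theorem2p7 (R : realType) (y : R) :
  exists2 d : R, 0 < d &
    forall x p : R, `|x| < d -> `|p| < d ->
      exists S1 S2 : R,
        series (rhs_term1 x p) @ \oo --> S1 /\
        series (rhs_term2 x y p) @ \oo --> S2 /\
        series (fun n => a_coef n y p 1 * x ^+ n) @ \oo -->
          x * y * p
          + x ^+ 2 * y * p * (1 - p) / (1 - y * p)
            * (S1 - y ^+ 2 * p ^+ 2 * S2).
Proof.
have [d d_gt0 small] := small_parameters y.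
exists d => // x p x_small p_small.
have [x4 p4 xyp4 yp_neq1] := small x p x_small p_small.
rewrite rhs_term2E.
exists (limn (series (rhs_term1 x p))), (limn (series (rhs_term1 (x * y * p) p))).
do 2 (split; first exact: is_cvg_rhs_term1).
set S1 := limn _; set S2 := limn _.
have -> : x * y * p + x ^+ 2 * y * p * (1 - p) / (1 - y * p) * (S1 - y ^+ 2 * p ^+ 2 * S2) =
    x * y * p / (1 - y * p) *
    (1 + (1 - p) * x * S1 - y * p * (1 + (1 - p) * (x * y * p) * S2)).
  by field; rewrite subr_eq0 eq_sym.
rewrite -area_seriesE // -area_seriesE //.
by apply: cvg_a_coef_series => //; lra.
Qed.
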